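(* Under the role-persistence and uniform-bound assumptions below, for any two initial states $\mathbf x,\mathbf y\in\{0,1\}^n$, let $\Pr(\mathbf X^t\mid\mathbf x)$ and $\Pr(\mathbf Y^t\mid\mathbf y)$ be the laws at time $t$ of the time-varying failure process started from $\mathbf X^0=\mathbf x$ and $\mathbf Y^0=\mathbf y$, respectively. Then for every $t\in\mathbb N$, $$d_{TV}\big(\Pr(\mathbf X^t\mid\mathbf x),\Pr(\mathbf Y^t\mid\mathbf y)\big)\le n\,\|\mathbf M_{t-1}\mathbf M_{t-2}\cdots\mathbf M_0\|,$$ where $\mathbf M_s=\mathbf A_s\mathbf W_s$ (the empty product for $t=0$ being $\mathbf I$), and consequently $$d_{TV}\big(\Pr(\mathbf X^t\mid\mathbf x),\Pr(\mathbf Y^t\mid\mathbf y)\big)\le n\,\bar\alpha^{\lfloor t/2\rfloor}.$$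
   Context: Fix a finite node set $\mathcal V$ with $n=|\mathcal V|$ and a sequence of directed graphs $G_t=(\mathcal V,\mathcal E_t)$, $t\in\mathbb N$. Let $\delta^t_{\mathrm{in}}(i)=\{j:(j,i)\in\mathcal E_t\}$. In $G_t$, a node $i$ is a pure obligee if it has no outgoing edge in $\mathcal E_t$, and a principal otherwise. For each $t$, $\mathbf W_t=(w^t_{ij})$ is an entrywise nonnegative $n\times n$ matrix with $w^t_{ij}>0$ only if $(j,i)\in\mathcal E_t$ and with every row sum at most $1$; $\mathbf A_t=\mathrm{diag}(\alpha_i^t)$ with $\alpha_i^t\in[0,1]$, and $\alpha_i^t=1$ whenever $i$ is a pure obligee in $G_t$. Each node has a fixed risk score $r_i\in[0,1]$. The time-varying failure process started at $\mathbf X^0$: for $t\ge0$, conditionally on $(\mathbf X^0,\dots,\mathbf X^t)$ the $X_i^{t+1}$, $i\in\mathcal V$, are independent with $X_i^{t+1}\sim\mathrm{Bernoulli}\big((1-\alpha_i^t)r_i+\alpha_i^t\sum_{j\in\delta^t_{\mathrm{in}}(i)}w^t_{ij}X_j^t\big)$. Role persistence: for every $i$ and $t$, $i$ is a pure obligee in $G_t$ if and only if it is a pure obligee in $G_{t+1}$. Uniform bound: there is $\bar\alpha\in(0,1)$ with $\alpha_i^t\le\bar\alpha$ for every $t$ and every node $i$ that is not a pure obligee in $G_t$. $d_{TV}(P,Q)=\max_{S\subseteq\{0,1\}^n}|P(S)-Q(S)|$; $\|\mathbf M\|$ is the induced $\ell_\infty$ matrix norm (maximum absolute row sum). *)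

From HB Require Import structures.
From mathcomp Require Import all_boot all_order all_algebra.
Set Implicit Arguments. Unset Strict Implicit. Unset Printing Implicit Defensive.
Import Order.TTheory GRing.Theory Num.Theory.
Local Open Scope ring_scope.

Definition state (n : nat) := {ffun 'I_n -> bool}.

Section Defs.
Variable R : realFieldType.
Variable n : nat.

Definition bern (p : R) (b : bool) : R := if b then p else 1 - p.

(* In-neighbourhood: E t j i means (j,i) is an edge of G_t *)
Definition pure_obligee (E : nat -> rel 'I_n) (t : nat) (i : 'I_n) : bool :=
  ~~ [exists k, E t i k].

(* Bernoulli parameter of X_i^{t+1} given X^t = y *)
Definition fail_prob (E : nat -> rel 'I_n) (W : nat -> 'M[R]_n)
  (alpha : nat -> 'I_n -> R) (r : 'I_n -> R) (t : nat) (y : state n) (i : 'I_n) : R :=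
  (1 - alpha t i) * r i
  + alpha t i * \sum_(j : 'I_n | E t j i) W t i j * (y j)%:R.

Definition trans E W alpha r (t : nat) (y z : state n) : R :=
  \prod_(i : 'I_n) bern (fail_prob E W alpha r t y i) (z i).

Fixpoint law E W alpha r (x : state n) (t : nat) : state n -> R :=
  match t with
  | 0 => fun z => if z == x then 1 else 0
  | t'.+1 => fun z => \sum_(y : state n) law E W alpha r x t' y * trans E W alpha r t' y z
  end.

Definition prob (P : state n -> R) (S : {set state n}) : R := \sum_(z in S) P z.

Definition dTV (P Q : state n -> R) : R :=
  \big[Num.max/0]_(S : {set state n}) `|prob P S - prob Q S|.

(* induced l_infinity norm: maximum absolute row sum *)
Definition normInf (M : 'M[R]_n) : R :=
  \big[Num.max/0]_(i : 'I_n) \sum_(j : 'I_n) `|M i j|.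

Definition Amx (alpha : nat -> 'I_n -> R) (s : nat) : 'M[R]_n :=
  diag_mx (\row_i alpha s i).

Definition Mmx (W : nat -> 'M[R]_n) (alpha : nat -> 'I_n -> R) (s : nat) : 'M[R]_n :=
  Amx alpha s *m W s.

Fixpoint Mprod (W : nat -> 'M[R]_n) (alpha : nat -> 'I_n -> R) (t : nat) : 'M[R]_n :=
  match t with
  | 0 => 1%:M
  | t'.+1 => Mmx W alpha t' *m Mprod W alpha t'
  end.

End Defs.

From HB Require Import structures.
From mathcomp Require Import all_boot all_order all_algebra.
From mathcomp Require Import ring lra.
Set Implicit Arguments. Unset Strict Implicit. Unset Printing Implicit Defensive.
Import Order.TTheory GRing.Theory Num.Theory.
Local Open Scope ring_scope.

(* Run the two copies of the process together, coupling every coordinate update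
   by the maximal coupling of the two Bernoulli laws: then X_i^{t+1} <> Y_i^{t+1}
   with probability |p_i(X^t) - p_i(Y^t)| <= sum_j (M_t)_ij [X_j^t <> Y_j^t].
   The vector of disagreement probabilities is therefore dominated by
   M_{t-1} ... M_0 1, and the coupling inequality bounds d_TV by its sum, which
   is at most n ||M_{t-1} ... M_0||.  For the geometric rate, every product
   M_{s+1} M_s of two consecutive factors has row sums at most abar: a principal
   row carries its own factor alpha <= abar, while a pure obligee at time s+1
   only draws on principals, which by role persistence are principals at time s
   as well. *)

Section BernoulliCoupling.
Variable R : realFieldType.
Implicit Types (p q : R) (u : bool * bool).

Definition side (b : bool) u : bool := if b then u.1 else u.2.

Definition bern_coupling p q u : R :=
  match u with
  | (true, true) => Num.min p q
  | (true, false) => p - Num.min p q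
  | (false, true) => q - Num.min p q
  | (false, false) => 1 - Num.max p q
  end.

Lemma sum_bool_pair (F : bool * bool -> R) :
  \sum_u F u = F (true, true) + F (true, false) + F (false, true) + F (false, false).
Proof.
rewrite (eq_bigr (fun u => F (u.1, u.2))) => [|[] //].
by rewrite -(pair_bigA _ (fun a b => F (a, b))) /= !big_bool /= !addrA.
Qed.

Lemma bern_coupling_ge0 p q u :
  0 <= p <= 1 -> 0 <= q <= 1 -> 0 <= bern_coupling p q u.
Proof.
move=> /andP[p0 p1] /andP[q0 q1].
by case: u => [[] []] /=; case: (leP p q) => ?; lra.
Qed.

Lemma bern_coupling_sum p q : \sum_u bern_coupling p q u = 1.
Proof. by rewrite sum_bool_pair /=; case: (leP p q) => ?; lra. Qed.

Lemma bern_coupling_side p q b v :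
  \sum_(u | side b u == v) bern_coupling p q u = bern (if b then p else q) v.
Proof.
rewrite big_mkcond sum_bool_pair /bern.
by case: b; case: v => /=; rewrite ?addr0 ?add0r; case: (leP p q) => ?; lra.
Qed.

Lemma bern_coupling_disagree p q :
  \sum_(u | u.1 != u.2) bern_coupling p q u = `|p - q|.
Proof.
rewrite big_mkcond sum_bool_pair /= addr0 add0r.
by case: (leP p q) => ?; [rewrite ler0_norm ?subr_le0 | rewrite gtr0_norm ?subr_gt0]; lra.
Qed.

End BernoulliCoupling.

Notation pair_state n := {ffun 'I_n -> bool * bool}.

Section ProductCoupling.
Variables (R : realFieldType) (n : nat).

Definition proj_state (b : bool) (f : pair_state n) : state n := [ffun i => side b (f i)].

Definition pair_of_states (x y : state n) : pair_state n := [ffun i => (x i, y i)].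

Definition marginal (J : pair_state n -> R) (b : bool) (z : state n) : R :=
  \sum_(f | proj_state b f == z) J f.

Definition disagreement (J : pair_state n -> R) (i : 'I_n) : R :=
  \sum_(f : pair_state n | (f i).1 != (f i).2) J f.

Definition prod_coupling (p q : 'I_n -> R) (f : pair_state n) : R :=
  \prod_i bern_coupling (p i) (q i) (f i).

Lemma proj_pair_of_states b (x y : state n) :
  proj_state b (pair_of_states x y) = if b then x else y.
Proof. by apply/ffunP => i; rewrite !ffunE; case: b. Qed.

Lemma sum_pred_indicator (T : finType) (P : pred T) (a : T) :
  \sum_(x | P x) (if x == a then 1 else 0 : R) = (P a)%:R.
Proof.
rewrite big_mkcond (bigD1 a) //= eqxx big1 ?addr0 => [|x /negbTE ->]; first by case: (P a).
by case: (P x).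
Qed.

Lemma sum_prod_family (c : 'I_n -> bool * bool -> R) (Q : 'I_n -> pred (bool * bool)) :
  \sum_(f : pair_state n | [forall i, Q i (f i)]) \prod_i c i (f i)
  = \prod_i \sum_(u | Q i u) c i u.
Proof. by rewrite bigA_distr_big_dep; apply: eq_bigl => f; apply/forallP/familyP. Qed.

Lemma prod_coupling_ge0 (p q : 'I_n -> R) f :
  (forall i, 0 <= p i <= 1) -> (forall i, 0 <= q i <= 1) -> 0 <= prod_coupling p q f.
Proof. by move=> hp hq; apply: prodr_ge0 => i _; apply: bern_coupling_ge0. Qed.

Lemma marginal_prod_coupling (p q : 'I_n -> R) b z :
  marginal (prod_coupling p q) b z = \prod_i bern (if b then p i else q i) (z i).
Proof.
pose Q i u := side b u == z i.
rewrite /marginal (eq_bigl (fun f : pair_state n => [forall i, Q i (f i)])); last first.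
  move=> f; rewrite /Q; apply/eqP/forallP => [<- i | e]; first by rewrite ffunE.
  by apply/ffunP => i; rewrite ffunE; apply/eqP/e.
rewrite /prod_coupling (sum_prod_family (fun i => bern_coupling (p i) (q i)) Q).
by apply: eq_bigr => i _; rewrite bern_coupling_side; clear Q; case: b.
Qed.

Lemma disagreement_prod_coupling (p q : 'I_n -> R) i0 :
  disagreement (prod_coupling p q) i0 = `|p i0 - q i0|.
Proof.
pose Q i (u : bool * bool) := (i == i0) ==> (u.1 != u.2).
rewrite /disagreement (eq_bigl (fun f : pair_state n => [forall i, Q i (f i)])); last first.
  move=> f; apply/idP/forallP => [h i | /(_ i0)]; last by rewrite /Q eqxx.
  by apply/implyP => /eqP ->.
rewrite /prod_coupling (sum_prod_family (fun i => bern_coupling (p i) (q i)) Q).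
rewrite (bigD1 i0) //= /Q eqxx bern_coupling_disagree big1 ?mulr1 // => i /negbTE hi.
by rewrite (eq_bigl predT) ?bern_coupling_sum // => u; rewrite hi.
Qed.

Lemma prob_marginal (J : pair_state n -> R) b (S : {set state n}) :
  prob (marginal J b) S = \sum_(f | proj_state b f \in S) J f.
Proof.
rewrite (partition_big (proj_state b) (mem S)) //; apply: eq_bigr => z zS.
by apply: eq_bigl => f; case: eqP => [->|]; rewrite ?andbT ?andbF.
Qed.

Lemma sum_exists_le (I T : finType) (P : I -> pred T) (F : T -> R) :
  (forall x, 0 <= F x) ->
  \sum_(x | [exists i, P i x]) F x <= \sum_i \sum_(x | P i x) F x.
Proof.
move=> F0; rewrite (exchange_big_dep predT) //=.
rewrite [X in _ <= X](bigID (fun x => [exists i, P i x])) /= -[X in X <= _]addr0.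
apply: lerD; last by apply: sumr_ge0 => x _; apply: sumr_ge0.
by apply: ler_sum => x /existsP[i Pi]; rewrite (bigD1 i) //= lerDl sumr_ge0.
Qed.

Lemma dist_sum_pred_le (T : finType) (A B D : pred T) (F : T -> R) :
  (forall x, 0 <= F x) -> (forall x, A x != B x -> D x) ->
  `|\sum_(x | A x) F x - \sum_(x | B x) F x| <= \sum_(x | D x) F x.
Proof.
move=> F0 hD; rewrite !(big_mkcond _ F) -sumrB; apply: le_trans (ler_norm_sum _ _ _) _.
apply: ler_sum => x; have := hD x; have := F0 x.
by case: (A x) (B x) (D x) => [] [] [] /=;
  rewrite ?subrr ?subr0 ?sub0r ?normrN ?normr0 ?ger0_norm // => ? /(_ isT).
Qed.

Lemma dTV_le_disagreement (J : pair_state n -> R) (P Q : state n -> R) :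
  (forall f, 0 <= J f) -> P =1 marginal J true -> Q =1 marginal J false ->
  dTV P Q <= \sum_i disagreement J i.
Proof.
move=> J0 eP eQ; apply: bigmax_le => [|S _].
  by apply: sumr_ge0 => i _; apply: sumr_ge0.
have -> : prob P S = prob (marginal J true) S by apply: eq_bigr => z _; apply: eP.
have -> : prob Q S = prob (marginal J false) S by apply: eq_bigr => z _; apply: eQ.
rewrite !prob_marginal.
apply: le_trans (sum_exists_le _ J0); apply: dist_sum_pred_le => // f.
apply: contraR => /existsPn agree; suff -> : proj_state true f = proj_state false f by [].
by apply/ffunP => i; rewrite !ffunE; apply/eqP; rewrite -[_ == _]negbK agree.
Qed.

End ProductCoupling.

Section RowSums.
Variables (R : realFieldType) (n : nat).
Implicit Types A B : 'M[R]_n.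

Lemma sum_row_mulmx A B i : \sum_k (A *m B) i k = \sum_j A i j * \sum_k B j k.
Proof.
under eq_bigr => k _ do rewrite mxE.
by rewrite exchange_big; apply: eq_bigr => j _; rewrite mulr_sumr.
Qed.

Lemma sum_row_mulmx_le A B i a b :
  (forall j, 0 <= A i j) -> 0 <= b ->
  \sum_j A i j <= a -> (forall j, \sum_k B j k <= b) ->
  \sum_k (A *m B) i k <= a * b.
Proof.
move=> A0 b0 hA hB; rewrite sum_row_mulmx.
apply: le_trans (_ : \sum_j A i j * b <= _).
  by apply: ler_sum => j _; apply: ler_wpM2l.
by rewrite -mulr_suml ler_wpM2r.
Qed.

Lemma sum_row_scalar_mx1 i : \sum_k (1%:M : 'M[R]_n) i k = 1.
Proof.
rewrite (bigD1 i) //= big1 ?mxE ?eqxx ?addr0 // => k /negbTE ki.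
by rewrite mxE eq_sym ki.
Qed.

Lemma mulmx_ge0 A B :
  (forall i j, 0 <= A i j) -> (forall i j, 0 <= B i j) -> forall i j, 0 <= (A *m B) i j.
Proof. by move=> A0 B0 i j; rewrite mxE sumr_ge0 // => k _; rewrite mulr_ge0. Qed.

Lemma sum_row_le_normInf A i : (forall j, 0 <= A i j) -> \sum_j A i j <= normInf A.
Proof.
move=> A0; apply: le_trans (le_bigmax _ _ i); apply: ler_sum => j _.
by rewrite ger0_norm.
Qed.

Lemma normInf_le A c :
  0 <= c -> (forall i j, 0 <= A i j) -> (forall i, \sum_k A i k <= c) ->
  normInf A <= c.
Proof.
move=> c0 A0 hA; apply: bigmax_le => // i _.
by under eq_bigr => k _ do rewrite ger0_norm //.
Qed.

End RowSums.

Section Process.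
Variables (R : realFieldType) (n : nat).
Variables (E : nat -> rel 'I_n) (W : nat -> 'M[R]_n).
Variables (alpha : nat -> 'I_n -> R) (r : 'I_n -> R).
Hypothesis hW_nonneg : forall t i j, 0 <= W t i j.
Hypothesis hW_row : forall t i, \sum_(j : 'I_n) W t i j <= 1.
Hypothesis halpha_range : forall t i, 0 <= alpha t i <= 1.
Hypothesis hr : forall i, 0 <= r i <= 1.

Local Notation fp := (fail_prob E W alpha r).

Lemma MmxE s i j : Mmx W alpha s i j = alpha s i * W s i j.
Proof. by rewrite /Mmx /Amx mul_diag_mx !mxE. Qed.

Lemma Mmx_ge0 s i j : 0 <= Mmx W alpha s i j.
Proof. by rewrite MmxE mulr_ge0 //; case/andP: (halpha_range s i). Qed.

Lemma Mprod_ge0 t i j : 0 <= Mprod W alpha t i j.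
Proof.
elim: t i j => [|t IH] i j /=; first by rewrite mxE ler0n.
exact: mulmx_ge0 (Mmx_ge0 t) IH i j.
Qed.

Lemma sum_row_Mmx_le s i : \sum_j Mmx W alpha s i j <= alpha s i.
Proof.
under eq_bigr => j _ do rewrite MmxE.
have [a0 _] := andP (halpha_range s i).
by rewrite -mulr_sumr -[X in _ <= X]mulr1 ler_wpM2l.
Qed.

Lemma sum_row_Mmx_le1 s i : \sum_j Mmx W alpha s i j <= 1.
Proof. by apply: le_trans (sum_row_Mmx_le s i) _; case/andP: (halpha_range s i). Qed.

Lemma fail_prob_ge0_le1 t y i : 0 <= fp t y i <= 1.
Proof.
rewrite /fail_prob; set S := \sum_(j | E t j i) _.
have S0 : 0 <= S by apply: sumr_ge0 => j _; rewrite mulr_ge0 ?ler0n.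
have S1 : S <= 1.
  apply: le_trans (hW_row t i); rewrite [X in _ <= X](bigID (E t ^~ i)) /= -[S]addr0.
  apply: lerD; last by apply: sumr_ge0.
  by apply: ler_sum => j _; rewrite -[X in _ <= X]mulr1 ler_wpM2l // lern1 leq_b1.
have /andP[r0 r1] := hr i; have /andP[a0 a1] := halpha_range t i.
by apply/andP; split; nra.
Qed.

Lemma dist_fail_prob_le t (a b : state n) i :
  `|fp t a i - fp t b i| <= \sum_(j | a j != b j) Mmx W alpha t i j.
Proof.
rewrite /fail_prob.
set Sa := \sum_(j | E t j i) _; set Sb := \sum_(j | E t j i) _.
have -> : (1 - alpha t i) * r i + alpha t i * Sa - ((1 - alpha t i) * r i + alpha t i * Sb)
  = alpha t i * (Sa - Sb) by ring.
have [a0 _] := andP (halpha_range t i).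
under eq_bigr => j _ do rewrite MmxE.
rewrite normrM ger0_norm // -mulr_sumr ler_wpM2l // -sumrB.
apply: le_trans (ler_norm_sum _ _ _) _.
apply: le_trans (_ : \sum_(j | E t j i) (if a j != b j then W t i j else 0) <= _).
  apply: ler_sum => j _; rewrite -mulrBr normrM ger0_norm //.
  by case: (a j); case: (b j);
    rewrite /= ?subrr ?normr0 ?mulr0 ?subr0 ?normr1 ?mulr1 ?sub0r ?normrN ?normr1 ?mulr1.
rewrite [X in _ <= X]big_mkcond [X in _ <= X](bigID (E t ^~ i)) /= lerDl.
by apply: sumr_ge0 => j _; case: (a j != b j).
Qed.

Definition coupled_trans t (h : pair_state n) : pair_state n -> R :=
  prod_coupling (fp t (proj_state true h)) (fp t (proj_state false h)).

Fixpoint coupled_law (x y : state n) (t : nat) : pair_state n -> R :=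
  match t with
  | 0 => fun f => if f == pair_of_states x y then 1 else 0
  | t'.+1 => fun f => \sum_h coupled_law x y t' h * coupled_trans t' h f
  end.

Lemma coupled_law_ge0 x y t f : 0 <= coupled_law x y t f.
Proof.
elim: t f => [|t IH] f /=; first by case: eqP.
apply: sumr_ge0 => h _; rewrite mulr_ge0 // prod_coupling_ge0 // => i.
all: exact: fail_prob_ge0_le1.
Qed.

Lemma marginal_coupled_trans t h b z :
  marginal (coupled_trans t h) b z = trans E W alpha r t (proj_state b h) z.
Proof. by rewrite marginal_prod_coupling; apply: eq_bigr => i _; case: b. Qed.

Lemma marginal_coupled_law x y t b z :
  marginal (coupled_law x y t) b z = law E W alpha r (if b then x else y) t z.
Proof.
elim: t z => [|t IH] z /=.
  by rewrite /marginal sum_pred_indicator proj_pair_of_states eq_sym; case: eqP.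
rewrite /marginal exchange_big /=.
under eq_bigr => h _ do rewrite -mulr_sumr -/(marginal _ b z) marginal_coupled_trans.
rewrite (partition_big (proj_state b) predT) //=; apply: eq_bigr => y' _.
by rewrite -IH /marginal mulr_suml; apply: eq_bigr => h /eqP ->.
Qed.

Lemma disagreement_coupled_law_succ x y t i :
  disagreement (coupled_law x y t.+1) i
  <= \sum_j Mmx W alpha t i j * disagreement (coupled_law x y t) j.
Proof.
rewrite /disagreement /= exchange_big /=.
under eq_bigr => h _ do rewrite -mulr_sumr -/(disagreement _ i) disagreement_prod_coupling.
apply: le_trans (_ : \sum_h coupled_law x y t h *
  \sum_(j | (h j).1 != (h j).2) Mmx W alpha t i j <= _).
  apply: ler_sum => h _; rewrite ler_wpM2l ?coupled_law_ge0 //.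
  by apply: le_trans (dist_fail_prob_le _ _ _ _) _; under eq_bigl => j do rewrite !ffunE.
under eq_bigr => h _ do rewrite mulr_sumr.
rewrite (exchange_big_dep predT) //=; apply: ler_sum => j _.
by rewrite mulr_sumr; apply: ler_sum => h _; rewrite mulrC.
Qed.

Lemma disagreement_coupled_law_le x y t i :
  disagreement (coupled_law x y t) i <= \sum_k Mprod W alpha t i k.
Proof.
elim: t i => [|t IH] i.
  by rewrite /disagreement sum_pred_indicator sum_row_scalar_mx1 lern1 leq_b1.
apply: le_trans (disagreement_coupled_law_succ _ _ _ _) _.
rewrite sum_row_mulmx; apply: ler_sum => j _.
by rewrite ler_wpM2l ?Mmx_ge0.
Qed.

End Process.

Section Contraction.
Variables (R : realFieldType) (n : nat).
Variables (E : nat -> rel 'I_n) (W : nat -> 'M[R]_n) (alpha : nat -> 'I_n -> R) (abar : R).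
Hypothesis hW_nonneg : forall t i j, 0 <= W t i j.
Hypothesis hW_supp : forall t i j, 0 < W t i j -> E t j i.
Hypothesis hW_row : forall t i, \sum_(j : 'I_n) W t i j <= 1.
Hypothesis halpha_range : forall t i, 0 <= alpha t i <= 1.
Hypothesis hpersist : forall t i, pure_obligee E t i = pure_obligee E t.+1 i.
Hypothesis habar : 0 < abar < 1.
Hypothesis hbound : forall t i, ~~ pure_obligee E t i -> alpha t i <= abar.

Let Mmx_ge0 := Mmx_ge0 hW_nonneg halpha_range.
Let sum_row_Mmx_le := sum_row_Mmx_le hW_row halpha_range.
Let sum_row_Mmx_le1 := sum_row_Mmx_le1 hW_row halpha_range.

Lemma sum_row_Mmx2_le s i : \sum_k (Mmx W alpha s.+1 *m Mmx W alpha s) i k <= abar.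
Proof.
have [ab0 ab1] := andP habar.
have [obl|princ] := boolP (pure_obligee E s.+1 i); last first.
  rewrite -[abar]mulr1; apply: sum_row_mulmx_le (Mmx_ge0 _ _) ler01 _ (sum_row_Mmx_le1 _).
  exact: le_trans (sum_row_Mmx_le _ _) (hbound princ).
rewrite sum_row_mulmx; apply: le_trans (_ : \sum_j Mmx W alpha s.+1 i j * abar <= _).
  apply: ler_sum => j _; rewrite MmxE.
  have [W0|Wpos] := eqVneq (W s.+1 i j) 0; first by rewrite W0 mulr0 !mul0r.
  have edge_ji : E s.+1 j i by apply: hW_supp; rewrite lt_def Wpos hW_nonneg.
  have princ_j : ~~ pure_obligee E s j.
    by rewrite hpersist negbK; apply/existsP; exists i.
  rewrite ler_wpM2l ?mulr_ge0 //; first by case/andP: (halpha_range s.+1 i).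
  exact: le_trans (sum_row_Mmx_le _ _) (hbound princ_j).
by rewrite -mulr_suml -[X in _ <= X]mul1r ler_pM2r // sum_row_Mmx_le1.
Qed.

Lemma sum_row_Mprod_le t i : \sum_k Mprod W alpha t i k <= abar ^+ t./2.
Proof.
have [ab0 _] := andP habar.
suff two_steps : forall t, (forall i, \sum_k Mprod W alpha t i k <= abar ^+ t./2)
  /\ (forall i, \sum_k Mprod W alpha t.+1 i k <= abar ^+ t.+1./2).
  by case: (two_steps t).
elim=> [|{}t [IH0 IH1]]; split=> // {}i.
- by rewrite sum_row_scalar_mx1.
- rewrite /= -[_ ^+ _]mulr1.
  apply: sum_row_mulmx_le (Mmx_ge0 _ _) ler01 (sum_row_Mmx_le1 _ _) _ => j.
  by rewrite sum_row_scalar_mx1.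
- rewrite [Mprod _ _ _]/= mulmxA exprS.
  apply: sum_row_mulmx_le (mulmx_ge0 (Mmx_ge0 _) (Mmx_ge0 _) i) _ (sum_row_Mmx2_le t i) IH0.
  by rewrite exprn_ge0 ?ltW.
Qed.

End Contraction.

Theorem mainTheorem14 (R : realFieldType) (n : nat)
  (E : nat -> rel 'I_n) (W : nat -> 'M[R]_n) (alpha : nat -> 'I_n -> R)
  (r : 'I_n -> R) (abar : R)
  (hW_nonneg : forall t i j, 0 <= W t i j)
  (hW_supp : forall t i j, 0 < W t i j -> E t j i)
  (hW_row : forall t i, \sum_(j : 'I_n) W t i j <= 1)
  (halpha_range : forall t i, 0 <= alpha t i <= 1)
  (halpha_obl : forall t i, pure_obligee E t i -> alpha t i = 1)
  (hr : forall i, 0 <= r i <= 1)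
  (hpersist : forall t i, pure_obligee E t i = pure_obligee E t.+1 i)
  (habar : 0 < abar < 1)
  (hbound : forall t i, ~~ pure_obligee E t i -> alpha t i <= abar)
  (x y : state n) (t : nat) :
  dTV (law E W alpha r x t) (law E W alpha r y t)
    <= n%:R * normInf (Mprod W alpha t)
  /\ dTV (law E W alpha r x t) (law E W alpha r y t) <= n%:R * abar ^+ t./2.
Proof.
set J := coupled_law E W alpha r x y t.
have dTV_le : dTV (law E W alpha r x t) (law E W alpha r y t)
    <= n%:R * normInf (Mprod W alpha t).
  have J_ge0 f : 0 <= J f by exact: coupled_law_ge0.
  apply: le_trans (dTV_le_disagreement J_ge0 _ _) _.
  - by move=> z; rewrite marginal_coupled_law.
  - by move=> z; rewrite marginal_coupled_law.
  apply: le_trans (_ : \sum_(i < n) normInf (Mprod W alpha t) <= _); last first.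
    by rewrite sumr_const card_ord mulr_natl.
  apply: ler_sum => i _.
  apply: le_trans (disagreement_coupled_law_le E hW_nonneg hW_row halpha_range hr x y t i) _.
  by apply: sum_row_le_normInf => j; apply: Mprod_ge0.
split=> //; apply: le_trans dTV_le _; rewrite ler_wpM2l //.
have [ab0 _] := andP habar.
apply: normInf_le; first by rewrite exprn_ge0 ?ltW.
  by move=> i j; apply: Mprod_ge0.
exact: sum_row_Mprod_le hW_nonneg hW_supp hW_row halpha_range hpersist habar hbound t.
Qed.
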